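(* Let $Y\subset\mathbb{R}^n$ be open and let $\omega\colon Y\to\mathbb{R}^n$, $f\colon Y\to\mathbb{R}^n$, $F\colon Y\to\mathbb{R}$ and $f^{\mathrm{num}}\colon Y\times Y\to\mathbb{R}^n$ be arbitrary functions with $f^{\mathrm{num}}(u,u)=f(u)$ for all $u\in Y$. (No further relation between $\omega,f,F$ and no convexity is assumed.) Then the following are equivalent: (A) there exists $F^{\mathrm{num}}\colon Y\times Y\to\mathbb{R}$ with $F^{\mathrm{num}}(u,u)=F(u)$ for all $u\in Y$ such that for all $u_-,u_0,u_+\in Y$, $$\omega(u_0)\cdot\big(f^{\mathrm{num}}(u_0,u_+)-f^{\mathrm{num}}(u_-,u_0)\big)\ \ge\ F^{\mathrm{num}}(u_0,u_+)-F^{\mathrm{num}}(u_-,u_0);$$ (B) for all $u_-,u_+\in Y$, $$\big(\omega(u_+)-\omega(u_-)\big)\cdot f^{\mathrm{num}}(u_-,u_+)\ \le\ \big(\omega(u_+)\cdot f(u_+)-F(u_+)\big)-\big(\omega(u_-)\cdot f(u_-)-F(u_-)\big).$$ Moreover, there exists a consistent $F^{\mathrm{num}}$ for which (A) holds with equality for all triples if and only if (B) holds with equality for all pairs; and in that case $F^{\mathrm{num}}$ is uniquely determined by $$F^{\mathrm{num}}(u_-,u_+)=\{\{F\}\}+\{\{\omega\}\}\cdot f^{\mathrm{num}}(u_-,u_+)-\{\{\omega\cdot f\}\}.$$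
   Context: For a function $a$ on $Y$ and states $u_-,u_+$, write $a_\pm=a(u_\pm)$, the mean $\{\{a\}\}=\tfrac12(a_-+a_+)$ and the jump $[\![a]\!]=a_+-a_-$. *)

From HB Require Import structures.
From mathcomp Require Import all_boot all_order all_algebra.
From mathcomp Require Import all_classical all_reals all_analysis.
Set Implicit Arguments. Unset Strict Implicit. Unset Printing Implicit Defensive.
Import Order.TTheory GRing.Theory Num.Theory.
Local Open Scope ring_scope.

Definition dotp (R : realType) (n : nat) (a b : 'rV[R]_n) : R :=
  \sum_(i < n) a ord0 i * b ord0 i.

(* With entropy_potential := omega . f - F and flux_at w um up := F w + omega(w) . (fnum um up - f w),
   the defect of the cell entropy inequality (A) at (um, um, up) is flux_at um - Fnum, at (um, up, up)
   it is Fnum - flux_at up, and these two add up to the defect of (B) at (um, up).  This gives (A) -> (B)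
   and, in the equality case, forces Fnum to be the mean of flux_at um and flux_at up.  Conversely the
   upwind flux u, v |-> flux_at u u v has at every triple (um, u0, up) exactly the defect of (B) at
   (um, u0). *)
From HB Require Import structures.
From mathcomp Require Import all_boot all_order all_algebra.
From mathcomp Require Import all_classical all_reals all_analysis.
From mathcomp Require Import lra.
Set Implicit Arguments. Unset Strict Implicit. Unset Printing Implicit Defensive.
Import Order.TTheory GRing.Theory Num.Theory numFieldNormedType.Exports.
Local Open Scope ring_scope.
Local Open Scope classical_set_scope.

Section Dotp.
Variables (R : realType) (n : nat).
Implicit Types (a b c : 'rV[R]_n) (k : R).

Lemma dotpDl a b c : dotp (a + b) c = dotp a c + dotp b c.
Proof. by rewrite /dotp -big_split; apply: eq_bigr => i _; rewrite mxE mulrDl. Qed.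

Lemma dotpBl a b c : dotp (a - b) c = dotp a c - dotp b c.
Proof. by rewrite /dotp -sumrB; apply: eq_bigr => i _; rewrite !mxE mulrBl. Qed.

Lemma dotpBr a b c : dotp a (b - c) = dotp a b - dotp a c.
Proof. by rewrite /dotp -sumrB; apply: eq_bigr => i _; rewrite !mxE mulrBr. Qed.

Lemma dotpZl k a c : dotp (k *: a) c = k * dotp a c.
Proof. by rewrite /dotp mulr_sumr; apply: eq_bigr => i _; rewrite !mxE mulrA. Qed.

End Dotp.

Section EntropyFlux.
Variables (R : realType) (n : nat) (Y : set 'rV[R]_n).
Variables (omega f : 'rV[R]_n -> 'rV[R]_n) (F : 'rV[R]_n -> R).
Variable fnum : 'rV[R]_n -> 'rV[R]_n -> 'rV[R]_n.
Hypothesis fnum_diag : forall u, Y u -> fnum u u = f u.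

Definition entropy_potential u := dotp (omega u) (f u) - F u.

Definition cell_defect (Fnum : 'rV[R]_n -> 'rV[R]_n -> R) um u0 up :=
  dotp (omega u0) (fnum u0 up - fnum um u0) - (Fnum u0 up - Fnum um u0).

Definition pair_defect um up :=
  (entropy_potential up - entropy_potential um)
  - dotp (omega up - omega um) (fnum um up).

Lemma cell_defect_ge0 Fnum um u0 up : (0 <= cell_defect Fnum um u0 up) =
  (Fnum u0 up - Fnum um u0 <= dotp (omega u0) (fnum u0 up - fnum um u0)).
Proof. exact: subr_ge0. Qed.

Lemma cell_defect_eq0 Fnum um u0 up : cell_defect Fnum um u0 up = 0 <->
  dotp (omega u0) (fnum u0 up - fnum um u0) = Fnum u0 up - Fnum um u0.
Proof. by rewrite /cell_defect; split => [/subr0_eq|->]; last exact: subrr. Qed.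

Lemma pair_defect_ge0 um up : (0 <= pair_defect um up) =
  (dotp (omega up - omega um) (fnum um up)
     <= (dotp (omega up) (f up) - F up) - (dotp (omega um) (f um) - F um)).
Proof. exact: subr_ge0. Qed.

Lemma pair_defect_eq0 um up : pair_defect um up = 0 <->
  dotp (omega up - omega um) (fnum um up)
    = (dotp (omega up) (f up) - F up) - (dotp (omega um) (f um) - F um).
Proof.
by rewrite /pair_defect /entropy_potential; split => [/subr0_eq/esym|<-]; last exact: subrr.
Qed.

Definition flux_at w um up := F w + dotp (omega w) (fnum um up - f w).

Definition upwind_flux u v := flux_at u u v.

Lemma cell_defect_left Fnum um up : (forall u, Y u -> Fnum u u = F u) -> Y um ->
  cell_defect Fnum um um up = flux_at um um up - Fnum um up.
Proof. by move=> FnumY Yum; rewrite /cell_defect /flux_at fnum_diag ?FnumY // !dotpBr; lra. Qed.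

Lemma cell_defect_right Fnum um up : (forall u, Y u -> Fnum u u = F u) -> Y up ->
  cell_defect Fnum um up up = Fnum um up - flux_at up um up.
Proof. by move=> FnumY Yup; rewrite /cell_defect /flux_at fnum_diag ?FnumY // !dotpBr; lra. Qed.

Lemma flux_at_diff um up : flux_at um um up - flux_at up um up = pair_defect um up.
Proof. by rewrite /flux_at /pair_defect /entropy_potential !dotpBr dotpBl; lra. Qed.

Lemma cell_defect_sum Fnum um up : (forall u, Y u -> Fnum u u = F u) -> Y um -> Y up ->
  cell_defect Fnum um um up + cell_defect Fnum um up up = pair_defect um up.
Proof.
by move=> FnumY Yum Yup; rewrite cell_defect_left // cell_defect_right // -flux_at_diff; lra.
Qed.

Lemma upwind_flux_diag u : Y u -> upwind_flux u u = F u.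
Proof. by move=> Yu; rewrite /upwind_flux /flux_at fnum_diag // dotpBr !subrr addr0. Qed.

Lemma cell_defect_upwind um u0 up :
  cell_defect upwind_flux um u0 up = pair_defect um u0.
Proof. by rewrite /cell_defect /upwind_flux -flux_at_diff /flux_at !dotpBr; lra. Qed.

Lemma entropy_flux_mean Fnum um up : (forall u, Y u -> Fnum u u = F u) -> Y um -> Y up ->
  cell_defect Fnum um um up = 0 -> cell_defect Fnum um up up = 0 ->
  Fnum um up = (F um + F up) / 2
               + dotp (2^-1 *: (omega um + omega up)) (fnum um up)
               - (dotp (omega um) (f um) + dotp (omega up) (f up)) / 2.
Proof.
move=> FnumY Yum Yup; rewrite cell_defect_left // cell_defect_right //.
by rewrite /flux_at dotpZl dotpDl !dotpBr; lra.
Qed.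

End EntropyFlux.

Theorem mainTheorem1 (R : realType) (n : nat) (Y : set 'rV[R]_n)
  (omega f : 'rV[R]_n -> 'rV[R]_n) (F : 'rV[R]_n -> R)
  (fnum : 'rV[R]_n -> 'rV[R]_n -> 'rV[R]_n) :
  open Y ->
  (forall u, Y u -> fnum u u = f u) ->
  (* (A) <-> (B) *)
  ((exists Fnum : 'rV[R]_n -> 'rV[R]_n -> R,
      (forall u, Y u -> Fnum u u = F u) /\
      (forall um u0 up, Y um -> Y u0 -> Y up ->
         dotp (omega u0) (fnum u0 up - fnum um u0)
           >= Fnum u0 up - Fnum um u0))
   <->
   (forall um up, Y um -> Y up ->
      dotp (omega up - omega um) (fnum um up)
        <= (dotp (omega up) (f up) - F up) - (dotp (omega um) (f um) - F um)))
  /\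
  (* equality versions *)
  ((exists Fnum : 'rV[R]_n -> 'rV[R]_n -> R,
      (forall u, Y u -> Fnum u u = F u) /\
      (forall um u0 up, Y um -> Y u0 -> Y up ->
         dotp (omega u0) (fnum u0 up - fnum um u0)
           = Fnum u0 up - Fnum um u0))
   <->
   (forall um up, Y um -> Y up ->
      dotp (omega up - omega um) (fnum um up)
        = (dotp (omega up) (f up) - F up) - (dotp (omega um) (f um) - F um)))
  /\
  (* uniqueness / explicit formula *)
  (forall Fnum : 'rV[R]_n -> 'rV[R]_n -> R,
      (forall u, Y u -> Fnum u u = F u) ->
      (forall um u0 up, Y um -> Y u0 -> Y up ->
         dotp (omega u0) (fnum u0 up - fnum um u0)
           = Fnum u0 up - Fnum um u0) ->
      forall um up, Y um -> Y up ->
        Fnum um up = (F um + F up) / 2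
                     + dotp (2^-1 *: (omega um + omega up)) (fnum um up)
                     - (dotp (omega um) (f um) + dotp (omega up) (f up)) / 2).
Proof.
move=> _ fnumY.
have upwindY := upwind_flux_diag omega F fnumY.
split; [|split].
- split => [[Fnum [FnumY cellA]] um up Yum Yup | pairB].
  + rewrite -pair_defect_ge0 -(cell_defect_sum omega fnumY FnumY Yum Yup).
    by apply: addr_ge0; rewrite cell_defect_ge0; apply: cellA.
  + exists (upwind_flux omega f F fnum); split => // um u0 up Yum Yu0 _.
    by rewrite -cell_defect_ge0 cell_defect_upwind pair_defect_ge0; apply: pairB.
- split => [[Fnum [FnumY cellA]] um up Yum Yup | pairB].
  + apply/pair_defect_eq0; rewrite -(cell_defect_sum omega fnumY FnumY Yum Yup).
    by rewrite !(proj2 (cell_defect_eq0 _ _ _ _ _ _)) ?addr0 //; apply: cellA.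
  + exists (upwind_flux omega f F fnum); split => // um u0 up Yum Yu0 _.
    by apply/cell_defect_eq0; rewrite cell_defect_upwind; apply/pair_defect_eq0/pairB.
- move=> Fnum FnumY cellA um up Yum Yup.
  by apply: (entropy_flux_mean fnumY FnumY Yum Yup); apply/cell_defect_eq0/cellA.
Qed.
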